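(* Let $R$ be a unital ring with involution and let $a,b\in R$ both be core invertible. Then the following are equivalent: (1) $a\overset{\circledast}{\leq} b$; (2) $a\ {*}\!\leq b$ and $ba^{\circledast}b=a$; (3) $a\ {*}\!\leq b$ and $b^{\circledast}aa^{\circledast}=a^{\circledast}$; (4) $a\ {*}\!\leq b$ and $b^{\circledast}ab^{\circledast}=a^{\circledast}$; (5) $a\leq_{\#} b$ and $ba^{\circledast}b=a$; (6) $a\leq_{\#} b$ and $a^{\circledast}ab^{\circledast}=a^{\circledast}$.
   Context: $R$ is a ring with identity and an involution $x\mapsto x^{*}$. An element $a\in R$ is core invertible if there exists $x\in R$ with $axa=a$, $xR=aR$ and $Rx=Ra^{*}$; such $x$ is unique, called the core inverse of $a$ and denoted $a^{\circledast}$. Every core invertible element $a$ is group invertible, where the group inverse $a^{\#}$ is the unique $x$ with $axa=a$, $xax=x$, $ax=xa$. For $a$ core invertible and $b\in R$, $a\overset{\circledast}{\leq} b$ means $a^{\circledast}a=a^{\circledast}b$ and $aa^{\circledast}=ba^{\circledast}$. The left star partial order: $a\ {*}\!\leq b$ means $a^{*}a=a^{*}b$ and $aR\subseteq bR$. The right sharp partial order (for group invertible $a$): $a\leq_{\#} b$ means $aa^{\#}=ba^{\#}$ and $Ra\subseteq Rb$. *)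

From HB Require Import structures.
From mathcomp Require Import all_boot all_order all_algebra.
Set Implicit Arguments. Unset Strict Implicit. Unset Printing Implicit Defensive.
Import GRing.Theory.
Local Open Scope ring_scope.

Definition involution (R : pzRingType) (s : R -> R) : Prop :=
  [/\ forall x y, s (x + y) = s x + s y,
      forall x y, s (x * y) = s y * s x
    & forall x, s (s x) = x].

Definition rsub (R : pzRingType) (x y : R) : Prop := exists u, x = y * u. (* xR ⊆ yR *)
Definition lsub (R : pzRingType) (x y : R) : Prop := exists u, x = u * y. (* Rx ⊆ Ry *)

Definition is_core_inverse (R : pzRingType) (s : R -> R) (a x : R) : Prop :=
  [/\ a * x * a = a, rsub x a /\ rsub a x & lsub x (s a) /\ lsub (s a) x].

Definition is_group_inverse (R : pzRingType) (a x : R) : Prop :=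
  [/\ a * x * a = a, x * a * x = x & a * x = x * a].

Definition core_le (R : pzRingType) (a ca b : R) : Prop :=
  ca * a = ca * b /\ a * ca = b * ca.

Definition lstar_le (R : pzRingType) (s : R -> R) (a b : R) : Prop :=
  s a * a = s a * b /\ rsub a b.

Definition rsharp_le (R : pzRingType) (a ga b : R) : Prop :=
  a * ga = b * ga /\ lsub a b.

(* Write x, y for the core inverses of a, b.  The conditions in the definitions
   of the three orders reduce to equations in the core inverses:
   a^* a = a^* b  iff  x a = x b  (since xR = aR and Rx = Ra^* ), and
   a a^# = b a^#  iff  a x = b x  (as a^# a x = x and x a a^# = a^#),
   so a <=core b means x a = x b and a x = b x, the left star order adds
   aR <= bR to the first equation, and the right sharp order adds Ra <= Rb to
   the second.  Each of the five extra equations then supplies the missing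
   half, using that a x is a hermitian idempotent with a x a = a, and that
   b y a = a when aR <= bR and a y b = a when Ra <= Rb. *)

From HB Require Import structures.
From mathcomp Require Import all_boot all_order all_algebra.
Local Open Scope ring_scope.
Import GRing.Theory.
Set Implicit Arguments. Unset Strict Implicit.

Section InnerInverse.
Variables (R : pzRingType) (b y : R).
Hypothesis byb : b * y * b = b.

Lemma rsub_inner_inverse (a : R) : rsub a b -> b * y * a = a.
Proof. by move=> [u ->]; rewrite !mulrA byb. Qed.

Lemma lsub_inner_inverse (a : R) : lsub a b -> a * y * b = a.
Proof. by move=> [u ->]; rewrite -!mulrA (mulrA b) byb. Qed.

End InnerInverse.

Section CoreInverse.
Variables (R : pzRingType) (s : R -> R).
Hypothesis inv : involution s.

Lemma involutionM x y : s (x * y) = s y * s x. Proof. by case: inv. Qed.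
Lemma involutionK x : s (s x) = x. Proof. by case: inv. Qed.

Variables (a x : R).
Hypothesis cx : is_core_inverse s a x.

Lemma core_inner : a * x * a = a. Proof. by case: cx. Qed.

Lemma core_right_factor : exists u, x = a * u.
Proof. by case: cx => _ [[u ->] _] _; exists u. Qed.

Lemma core_left_star : exists w, x = w * s a.
Proof. by case: cx => _ _ [[w ->] _]; exists w. Qed.

Lemma star_left_core : exists t, s a = t * x.
Proof. by case: cx => _ _ [_ [t ->]]; exists t. Qed.

(* Rx = Ra^* puts (a x)^* in aR, so (a x)^* = a x (a x)^*, which is hermitian. *)
Lemma core_herm : s (a * x) = a * x.
Proof.
have [w ew] := core_left_star; have [t et] := star_left_core.
have sax : s (a * x) = a * (s w * t * x).
  by rewrite involutionM {1}ew involutionM involutionK et !mulrA.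
have saxK : a * x * s (a * x) = s (a * x) by rewrite sax !mulrA core_inner.
by have := congr1 s saxK; rewrite involutionM involutionK saxK.
Qed.

Lemma star_core : s a * a * x = s a.
Proof. by rewrite -mulrA -core_herm -involutionM core_inner. Qed.

Lemma core_outer : x * a * x = x.
Proof.
have [w ew] := core_left_star.
by rewrite {1}ew -!mulrA (mulrA (s a)) star_core.
Qed.

Lemma core_left_unit : x * a * a = a.
Proof.
by case: cx => _ [_ [v ev]] _; rewrite {2}ev mulrA core_outer -ev.
Qed.

Lemma core_right_absorb : a * x * x = x.
Proof.
by have [u eu] := core_right_factor; rewrite {2}eu mulrA core_inner -eu.
Qed.

End CoreInverse.

Section CoreOrder.
Variables (R : pzRingType) (s : R -> R) (a b x y g : R).
Hypotheses (inv : involution s) (cx : is_core_inverse s a x)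
  (cy : is_core_inverse s b y) (ga : is_group_inverse a g).

Lemma star_eq_iff_core_eq : s a * a = s a * b <-> x * a = x * b.
Proof.
have [w ew] := core_left_star cx; have [t et] := star_left_core cx.
by split=> e; [rewrite ew | rewrite et]; rewrite -!mulrA e.
Qed.

Lemma lstar_leE : lstar_le s a b <-> x * a = x * b /\ rsub a b.
Proof. by split=> [] [e ab]; split=> //; apply/star_eq_iff_core_eq. Qed.

Lemma rsharp_leE : rsharp_le a g b <-> a * x = b * x /\ lsub a b.
Proof.
case: ga => aga gag ag_ga.
have gxag : g = x * a * g.
  have gagg : g = a * g * g by rewrite ag_ga gag.
  by rewrite {2}gagg !mulrA (core_left_unit inv cx) -gagg.
have xgax : x = g * a * x.
  have [u eu] := core_right_factor cx.
  by rewrite {2}eu mulrA -ag_ga aga -eu.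
have agx : a * g = b * g <-> a * x = b * x.
  by split=> e; [rewrite xgax | rewrite gxag]; rewrite !mulrA e.
by split=> [] [e ab]; split=> //; apply/agx.
Qed.

Lemma rsub_core_mul : rsub a b -> x * b * y = x.
Proof.
move=> ab; have [w ew] := core_left_star cx.
have sab : s a * (b * y) = s a.
  have bya := rsub_inner_inverse (core_inner cy) ab.
  by rewrite -(core_herm inv cy) -involutionM // bya.
by rewrite {1}ew -!mulrA sab.
Qed.

Lemma core_le_lstar : core_le a x b -> lstar_le s a b.
Proof.
move=> [xab axb]; apply/lstar_leE; split => //.
by exists (x * a); rewrite mulrA -axb (core_inner cx).
Qed.

Lemma core_le_rsharp : core_le a x b -> rsharp_le a g b.
Proof.
move=> [xab axb]; apply/rsharp_leE; split => //.
by exists (a * x); rewrite -mulrA -xab mulrA (core_inner cx).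
Qed.

Lemma core_le_sandwich : core_le a x b -> b * x * b = a.
Proof. by move=> [xab axb]; rewrite -axb -mulrA -xab mulrA (core_inner cx). Qed.

Lemma core_le_core_left : core_le a x b -> y * a * x = x.
Proof.
move=> [_ axb]; have bxx : x = b * x * x by rewrite -axb (core_right_absorb cx).
by rewrite -mulrA axb {1}bxx !mulrA (core_left_unit inv cy) -bxx.
Qed.

Lemma core_le_iff_lstar_sandwich :
  core_le a x b <-> lstar_le s a b /\ b * x * b = a.
Proof.
split=> [le | [/lstar_leE [xab _] bxb]].
  by split; [apply: core_le_lstar | apply: core_le_sandwich].
split => //.
by rewrite -{1}bxb -(mulrA b x b) -xab -mulrA (core_outer inv cx).
Qed.

Lemma core_le_iff_lstar_core_left :
  core_le a x b <-> lstar_le s a b /\ y * a * x = x.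
Proof.
split=> [le | [/lstar_leE [xab ab] yax]].
  by split; [apply: core_le_lstar | apply: core_le_core_left].
split => //.
by rewrite -{2}yax !mulrA (rsub_inner_inverse (core_inner cy)).
Qed.

Lemma core_le_iff_lstar_core_both :
  core_le a x b <-> lstar_le s a b /\ y * a * y = x.
Proof.
split=> [le | [/lstar_leE [xab ab] yay]].
  have /lstar_leE [xab ab] := core_le_lstar le.
  split; first exact: core_le_lstar.
  have axba : a * x * b = a by rewrite -mulrA -xab mulrA (core_inner cx).
  by rewrite -{1}axba !mulrA core_le_core_left // rsub_core_mul.
split => //.
have ayb : a * y = b * x.
  by rewrite -yay !mulrA (rsub_inner_inverse (core_inner cy)).
have -> : a * x = (a * y) * (a * y) by rewrite -yay !mulrA.
by rewrite ayb -mulrA (mulrA x b x) -xab (core_outer inv cx).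
Qed.

Lemma core_le_iff_rsharp_sandwich :
  core_le a x b <-> rsharp_le a g b /\ b * x * b = a.
Proof.
split=> [le | [/rsharp_leE [axb _] bxb]].
  by split; [apply: core_le_rsharp | apply: core_le_sandwich].
split => //.
by rewrite -{2}(core_outer inv cx) -(mulrA x a x) axb -!mulrA (mulrA b) bxb.
Qed.

Lemma core_le_iff_rsharp_core_right :
  core_le a x b <-> rsharp_le a g b /\ x * a * y = x.
Proof.
split=> [le | [/rsharp_leE [axb ab] xay]].
  have /lstar_leE [xab ab] := core_le_lstar le.
  by split; [apply: core_le_rsharp | rewrite xab rsub_core_mul].
split => //.
by rewrite -{2}xay -!mulrA (mulrA a) (lsub_inner_inverse (core_inner cy)).
Qed.

End CoreOrder.

Theorem theorem3p2 (R : pzRingType) (s : R -> R) (a b ca cb ga : R) :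
  involution s ->
  is_core_inverse s a ca -> is_core_inverse s b cb ->
  is_group_inverse a ga ->
  [/\ (core_le a ca b <-> lstar_le s a b /\ b * ca * b = a),
      (core_le a ca b <-> lstar_le s a b /\ cb * a * ca = ca),
      (core_le a ca b <-> lstar_le s a b /\ cb * a * cb = ca),
      (core_le a ca b <-> rsharp_le a ga b /\ b * ca * b = a)
    & (core_le a ca b <-> rsharp_le a ga b /\ ca * a * cb = ca)].
Proof.
move=> inv ca_core cb_core ga_group; split.
- exact: core_le_iff_lstar_sandwich inv ca_core.
- exact: core_le_iff_lstar_core_left inv ca_core cb_core.
- exact: core_le_iff_lstar_core_both inv ca_core cb_core.
- exact: core_le_iff_rsharp_sandwich inv ca_core ga_group.
- exact: core_le_iff_rsharp_core_right inv ca_core cb_core ga_group.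
Qed.
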